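(* Let $N_7$ be the connected, simply connected nilpotent Lie group with Lie algebra $\mathfrak{n}_7$ spanned by $X_1,\dots,X_7$ with non-trivial brackets $[X_1,X_3]=X_5,\ [X_1,X_4]=X_6,\ [X_1,X_5]=X_7,\ [X_2,X_3]=-X_6,\ [X_2,X_4]=X_5,\ [X_2,X_6]=X_7$. Let $(f_5^k)_k,(f_6^k)_k$ be sequences of nonzero real numbers with $\lim_k f_5^k=0$ and $\lim_k f_6^k=0$, and consider the sequence of coadjoint orbits $\mathcal O_k=\mathcal O_{(f_5^k,f_6^k)}$ in $\mathfrak{n}_7^*/N_7$. Then the set of limit points of $(\mathcal O_k)_k$ in $\mathfrak{n}_7^*/N_7$ is exactly $\Gamma_0$, the set of coadjoint orbits of functionals $f_1X_1^*+f_2X_2^*+f_3X_3^*+f_4X_4^*$, $(f_1,f_2,f_3,f_4)\in\mathbb R^4$.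
   Context: $N_7$ acts on $\mathfrak{n}_7^*$ by the coadjoint action $\mathrm{Ad}^*(g)f=f\circ\mathrm{Ad}(g^{-1})$, $X_1^*,\dots,X_7^*$ is the dual basis, and $\mathfrak{n}_7^*/N_7$ carries the quotient topology. The orbit $\mathcal O_{(f_5,f_6)}$ of $f_5X_5^*+f_6X_6^*$ (with $(f_5,f_6)\neq(0,0)$) equals $\{x_1X_1^*+x_2X_2^*+x_3X_3^*+x_4X_4^*+f_5X_5^*+f_6X_6^*: x_i\in\mathbb R\}$. Functionals vanishing on $X_5,X_6,X_7$ are fixed by the coadjoint action, so their orbits are singletons (these correspond to the unitary characters of $N_7$). *)

From HB Require Import structures.
From mathcomp Require Import all_boot all_order all_algebra.
From mathcomp Require Import all_classical all_reals all_analysis.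
Set Implicit Arguments. Unset Strict Implicit. Unset Printing Implicit Defensive.
Import Order.TTheory GRing.Theory Num.Theory.
Import numFieldNormedType.Exports.
Local Open Scope classical_set_scope.
Local Open Scope ring_scope.

Section N7.
Variable R : realType.

(* Structure constants of n_7 in the basis X_1..X_7 (0-indexed):
   [X_(i+1), X_(j+1)] = \sum_k sc i j k X_(k+1). *)
Definition sc (i j k : nat) : R :=
  match i, j, k with
  | 0, 2, 4 => 1 | 2, 0, 4 => -1
  | 0, 3, 5 => 1 | 3, 0, 5 => -1
  | 0, 4, 6 => 1 | 4, 0, 6 => -1
  | 1, 2, 5 => -1 | 2, 1, 5 => 1
  | 1, 3, 4 => 1 | 3, 1, 4 => -1
  | 1, 5, 6 => 1 | 5, 1, 6 => -1
  | _, _, _ => 0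
  end.

(* Elements of n_7 and of n_7^* are coordinate row vectors:
   x = \sum_i x_i X_(i+1);  for f in n_7^*, f_j = f(X_(j+1)). *)
Definition lie_bracket (x y : 'rV[R]_7) : 'rV[R]_7 :=
  \row_(k < 7) \sum_(i < 7) \sum_(j < 7) x 0 i * y 0 j * sc i j k.

(* Matrix of ad x acting on row vectors: y *m adm x = [x, y]. *)
Definition adm (x : 'rV[R]_7) : 'M[R]_7 :=
  \matrix_(j < 7, k < 7) \sum_(i < 7) x 0 i * sc i j k.

(* Ad(exp x) = e^{ad x} (finite sum since ad x is nilpotent on R^7). *)
Definition Adm (x : 'rV[R]_7) : 'M[R]_7 :=
  \sum_(n < 8) (n`!%:R)^-1 *: (adm x) ^+ n.

(* N_7 is parametrized by exponential coordinates g = exp x (exp is a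
   diffeomorphism n_7 -> N_7).  Coadjoint action:
   Ad^*(exp x) f = f o Ad(exp x)^{-1} = f o e^{-ad x}.
   (f o A)(X_(j+1)) = \sum_k A_jk f_k, i.e. row vector f *m A^T. *)
Definition coad (x f : 'rV[R]_7) : 'rV[R]_7 := f *m (Adm (- x))^T.

Definition coadj_orbit (f : 'rV[R]_7) : set 'rV[R]_7 := [set coad x f | x in setT].

Definition is_orbit (O : set 'rV[R]_7) : Prop := exists f, O = coadj_orbit f.

(* Open sets of the orbit space n_7^*/N_7 with the quotient topology:
   collections of orbits whose union is open in n_7^*. *)
Definition quot_open (U : set (set 'rV[R]_7)) : Prop :=
  (forall O, U O -> is_orbit O) /\ open (\bigcup_(O in U) O).

Definition orbit_converges (Ok : nat -> set 'rV[R]_7) (O : set 'rV[R]_7) : Prop :=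
  forall U, quot_open U -> U O -> exists N, forall k, (N <= k)%N -> U (Ok k).

Definition functional (a1 a2 a3 a4 a5 a6 a7 : R) : 'rV[R]_7 :=
  \row_(i < 7) nth 0 [:: a1; a2; a3; a4; a5; a6; a7] i.

End N7.

(* For f = f1 X1^* + ... + f7 X7^*, the coadjoint action fixes f7 and, where
   f7 = 0, also f5 and f6, translating (f1, ..., f4) by a map that is onto
   when (f5, f6) <> 0.  So the orbits O_k are the planes
   {f5 = f5^k, f6 = f6^k, f7 = 0}, the characters are fixed points, and for
   c > 0 the set {f7 <> 0 or |f5| + |f6| > c} is open and a union of orbits.
   A character orbit is a limit because the planes O_k contain points
   converging to it.  Any other orbit lies in such a set for some c > 0, whose
   orbits form an open neighbourhood in the orbit space that misses O_k for
   large k. *)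

From HB Require Import structures.
From mathcomp Require Import all_boot all_order all_algebra.
From mathcomp Require Import all_classical all_reals all_analysis.
From mathcomp Require Import ring lra zify.
Import Order.TTheory GRing.Theory Num.Theory.
Import numFieldNormedType.Exports.
Local Open Scope classical_set_scope.
Local Open Scope ring_scope.
Set Implicit Arguments. Unset Strict Implicit. Unset Printing Implicit Defensive.

Section CoadjointOrbitsN7.
Variable R : realType.
Implicit Types (a b c y : R) (f p q g x : 'rV[R]_7) (V : set 'rV[R]_7).

Definition ad_entry a0 a1 a2 a3 a4 a5 a6 (j k : nat) : R :=
  match j, k with
  | 0, 4 => - a2 | 0, 5 => - a3 | 0, 6 => - a4
  | 1, 4 => - a3 | 1, 5 => a2 | 1, 6 => - a5
  | 2, 4 => a0 | 2, 5 => - a1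
  | 3, 4 => a1 | 3, 5 => a0
  | 4, 6 => a0 | 5, 6 => a1
  | _, _ => 0
  end.

Definition ad_sqr_entry a0 a1 a2 a3 (j k : nat) : R :=
  match j, k with
  | 0, 6 => - a2 * a0 - a3 * a1
  | 1, 6 => - a3 * a0 + a2 * a1
  | 2, 6 => a0 * a0 - a1 * a1
  | 3, 6 => a1 * a0 + a0 * a1
  | _, _ => 0
  end.

Lemma adm_functional a0 a1 a2 a3 a4 a5 a6 :
  adm (functional a0 a1 a2 a3 a4 a5 a6) =
  \matrix_(j, k) ad_entry a0 a1 a2 a3 a4 a5 a6 j k.
Proof.
apply/matrixP => j k; rewrite !mxE !big_ord_recr big_ord0 /= !mxE /=.
case: j => [[|[|[|[|[|[|[|j]]]]]]] ?] //; case: k => [[|[|[|[|[|[|[|k]]]]]]] ?] //=;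
  by rewrite ?mulr0 ?mulr1 ?mulrN1 ?add0r ?addr0.
Qed.

Lemma adm_functional_sqr a0 a1 a2 a3 a4 a5 a6 :
  adm (functional a0 a1 a2 a3 a4 a5 a6) ^+ 2 =
  \matrix_(j, k) ad_sqr_entry a0 a1 a2 a3 j k.
Proof.
rewrite adm_functional expr2; apply/matrixP => j k.
rewrite !mxE !big_ord_recr big_ord0 /= !mxE /=.
case: j => [[|[|[|[|[|[|[|j]]]]]]] ?] //; case: k => [[|[|[|[|[|[|[|k]]]]]]] ?] //=;
  rewrite ?mulr0 ?mul0r ?add0r ?addr0 //; ring.
Qed.

Lemma adm_functional_cube a0 a1 a2 a3 a4 a5 a6 :
  adm (functional a0 a1 a2 a3 a4 a5 a6) ^+ 3 = 0.
Proof.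
rewrite exprS adm_functional_sqr adm_functional; apply/matrixP => j k.
rewrite !mxE !big_ord_recr big_ord0 /= !mxE /=.
case: j => [[|[|[|[|[|[|[|j]]]]]]] ?] //; case: k => [[|[|[|[|[|[|[|k]]]]]]] ?] //=;
  by rewrite ?mulr0 ?mul0r ?add0r ?addr0.
Qed.

Lemma Adm_quadratic x : adm x ^+ 3 = 0 ->
  Adm x = 1 + adm x + 2^-1 *: adm x ^+ 2.
Proof.
move=> ad3; have adn n : (3 <= n)%N -> adm x ^+ n = 0.
  by move=> n3; rewrite -(subnK n3) exprD ad3 mulr0.
rewrite /Adm !big_ord_recr big_ord0 /= ad3 !(adn 4, adn 5, adn 6, adn 7) //.
by rewrite !scaler0 !addr0 add0r expr0 expr1 invr1 !scale1r.
Qed.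

Lemma exists_functional p :
  exists a0 a1 a2 a3 a4 a5 a6, p = functional a0 a1 a2 a3 a4 a5 a6.
Proof.
exists (p 0 (inord 0)), (p 0 (inord 1)), (p 0 (inord 2)), (p 0 (inord 3)),
  (p 0 (inord 4)), (p 0 (inord 5)), (p 0 (inord 6)).
apply/matrixP => i j; rewrite (ord1 i) mxE.
by case: j => [[|[|[|[|[|[|[|j]]]]]]] ?] //=; congr (p _ _); apply/val_inj; rewrite /= inordK.
Qed.

Lemma coad_functional a0 a1 a2 a3 a4 a5 a6 b0 b1 b2 b3 b4 b5 b6 :
  coad (functional a0 a1 a2 a3 a4 a5 a6) (functional b0 b1 b2 b3 b4 b5 b6) =
  functional
   (b0 + a2 * b4 + a3 * b5 + a4 * b6 - 2^-1 * (a2 * a0 + a3 * a1) * b6)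
   (b1 + a3 * b4 - a2 * b5 + a5 * b6 + 2^-1 * (a2 * a1 - a3 * a0) * b6)
   (b2 - a0 * b4 + a1 * b5 + 2^-1 * (a0 ^+ 2 - a1 ^+ 2) * b6)
   (b3 - a1 * b4 - a0 * b5 + a0 * a1 * b6)
   (b4 - a0 * b6)
   (b5 - a1 * b6)
   b6.
Proof.
rewrite /coad; have -> : - functional a0 a1 a2 a3 a4 a5 a6 =
          functional (- a0) (- a1) (- a2) (- a3) (- a4) (- a5) (- a6).
  by apply/matrixP => i j; rewrite !mxE; case: j => [[|[|[|[|[|[|[|j]]]]]]] ?].
rewrite Adm_quadratic ?adm_functional_cube // adm_functional_sqr adm_functional.
apply/matrixP => i j; rewrite !mxE !big_ord_recr big_ord0 /= !mxE /=.
by case: j => [[|[|[|[|[|[|[|j]]]]]]] ?] //=; field.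
Qed.

(* Indices are 0-based: [fcoef 6 q] is the coefficient of X_7^* in q. *)
Definition fcoef (j : nat) q : R := q 0 (inord j).

Lemma fcoef_functional j a0 a1 a2 a3 a4 a5 a6 : (j < 7)%N ->
  fcoef j (functional a0 a1 a2 a3 a4 a5 a6) = nth 0 [:: a0; a1; a2; a3; a4; a5; a6] j.
Proof. by move=> j7; rewrite /fcoef mxE inordK. Qed.

Lemma coad_fcoef6 x g : fcoef 6 (coad x g) = fcoef 6 g.
Proof.
have [a0 [a1 [a2 [a3 [a4 [a5 [a6 ->]]]]]]] := exists_functional x.
have [b0 [b1 [b2 [b3 [b4 [b5 [b6 ->]]]]]]] := exists_functional g.
by rewrite coad_functional !fcoef_functional.
Qed.

Lemma coad_fcoef45 x g : fcoef 6 g = 0 ->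
  fcoef 4 (coad x g) = fcoef 4 g /\ fcoef 5 (coad x g) = fcoef 5 g.
Proof.
have [a0 [a1 [a2 [a3 [a4 [a5 [a6 ->]]]]]]] := exists_functional x.
have [b0 [b1 [b2 [b3 [b4 [b5 [b6 ->]]]]]]] := exists_functional g.
by rewrite coad_functional !fcoef_functional //= => ->; rewrite !mulr0 !subr0.
Qed.

Lemma coad0 p : coad 0 p = p.
Proof.
have [b0 [b1 [b2 [b3 [b4 [b5 [b6 ->]]]]]]] := exists_functional p.
have -> : 0 = functional 0 0 0 0 0 0 0 :> 'rV[R]_7.
  by apply/matrixP => i j; rewrite !mxE; case: j => [[|[|[|[|[|[|[|j]]]]]]] ?].
by rewrite coad_functional; congr functional; ring.
Qed.

Lemma coadj_orbit_refl p : coadj_orbit p p.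
Proof. by exists 0; rewrite ?coad0. Qed.

Lemma coadj_orbit_character a0 a1 a2 a3 :
  coadj_orbit (functional a0 a1 a2 a3 0 0 0) = [set functional a0 a1 a2 a3 0 0 0].
Proof.
apply/seteqP; split => [_ [x _ <-] | _ ->]; last exact: coadj_orbit_refl.
have [c0 [c1 [c2 [c3 [c4 [c5 [c6 ->]]]]]]] := exists_functional x.
by rewrite coad_functional /=; congr functional; ring.
Qed.

Lemma coadj_orbit_generic b0 b1 b2 b3 b4 b5 : (b4, b5) != (0, 0) ->
  coadj_orbit (functional b0 b1 b2 b3 b4 b5 0) =
  [set p | exists y0 y1 y2 y3, p = functional y0 y1 y2 y3 b4 b5 0].
Proof.
move=> b45; have D_neq0 : b4 ^+ 2 + b5 ^+ 2 != 0.
  by rewrite paddr_eq0 ?sqr_ge0 // !sqrf_eq0 -xpair_eqE.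
apply/seteqP; split => [_ [x _ <-] | _ [y0 [y1 [y2 [y3 ->]]]]].
  have [a0 [a1 [a2 [a3 [a4 [a5 [a6 ->]]]]]]] := exists_functional x.
  rewrite coad_functional; do 4 eexists; congr functional; ring.
(* On [b6 = 0], (a0, a1) and (a2, a3) act by translation through the
   rotation-dilations [[-b4, b5], [-b5, -b4]] and [[b4, b5], [-b5, b4]],
   of determinant D; the witness inverts them. *)
pose D := b4 ^+ 2 + b5 ^+ 2.
pose u := y0 - b0; pose v := y1 - b1; pose s := y2 - b2; pose t := y3 - b3.
exists (functional (- (s * b4 + t * b5) / D) ((s * b5 - t * b4) / D)
                   ((u * b4 - v * b5) / D) ((u * b5 + v * b4) / D) 0 0 0) => //.
by rewrite coad_functional /u /v /s /t /D; congr functional; field.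
Qed.

Lemma coadj_orbit_generic_of_mem g b0 b1 b2 b3 b4 b5 : (b4, b5) != (0, 0) ->
  coadj_orbit g (functional b0 b1 b2 b3 b4 b5 0) ->
  coadj_orbit g = coadj_orbit (functional 0 0 0 0 b4 b5 0).
Proof.
move=> b45 [x _ gx].
have g6 : fcoef 6 g = 0 by rewrite -(coad_fcoef6 x) gx fcoef_functional.
have [g4 g5] := coad_fcoef45 x g6; rewrite gx !fcoef_functional // in g4 g5.
have [c0 [c1 [c2 [c3 [c4 [c5 [c6 g_eq]]]]]]] := exists_functional g.
rewrite g_eq !fcoef_functional //= in g4 g5 g6.
by rewrite g_eq g6 -g4 -g5 !coadj_orbit_generic // g4 g5.
Qed.

Definition coad_invariant V := forall x g, V (coad x g) <-> V g.

Lemma coad_invariant_orbit_sub V g : coad_invariant V -> V g -> coadj_orbit g `<=` V.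
Proof. by move=> Vinv Vg _ [x _ <-]; apply/Vinv. Qed.

Lemma quot_open_invariant V : open V -> coad_invariant V ->
  quot_open [set coadj_orbit g | g in V].
Proof.
move=> Vopen Vinv; split => [_ [g _ <-] | ]; first by exists g.
suff -> : \bigcup_(O in [set coadj_orbit g | g in V]) O = V by [].
apply/seteqP; split => [p [_ [g Vg <-]] | p Vp]; first exact: coad_invariant_orbit_sub.
by exists (coadj_orbit p); [exists p | exact: coadj_orbit_refl].
Qed.

Lemma orbit_converges_invariant (Ok : nat -> set 'rV[R]_7) f V :
  orbit_converges Ok (coadj_orbit f) -> open V -> coad_invariant V -> V f ->
  exists N, forall k, (N <= k)%N -> Ok k `<=` V.
Proof.
move=> conv Vopen Vinv Vf.
have [N OkV] := conv _ (quot_open_invariant Vopen Vinv) (ex_intro2 _ _ f Vf erefl).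
exists N => k /OkV [g Vg <-]; exact: coad_invariant_orbit_sub.
Qed.

Definition off_characters (c : R) : set 'rV[R]_7 :=
  [set q | fcoef 6 q != 0 \/ c < `|fcoef 4 q| + `|fcoef 5 q|].

Lemma open_off_characters c : open (off_characters c).
Proof.
apply: openU.
  apply: (@open_comp _ _ (fcoef 6) [set r | r != 0]); last exact: open_neq.
  by move=> q _; exact: coord_continuous.
apply: (@open_comp _ _ (fun q => `|fcoef 4 q| + `|fcoef 5 q|) [set r | c < r]).
  move=> q _; apply: (@continuousD _ _ _ (fun q => `|fcoef 4 q|) (fun q => `|fcoef 5 q|));
    apply: continuous_comp;
    by [exact: coord_continuous | exact: norm_continuous].
exact: open_gt.
Qed.

Lemma coad_invariant_off_characters c : coad_invariant (off_characters c).
Proof.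
move=> x g; rewrite /off_characters /= coad_fcoef6.
have [g6 | g6_neq0] := eqVneq (fcoef 6 g) 0; last by split=> _; left.
by have [-> ->] := coad_fcoef45 x g6.
Qed.

Lemma off_characters_noncharacter b0 b1 b2 b3 b4 b5 b6 :
  ~ [/\ b4 = 0, b5 = 0 & b6 = 0] ->
  exists2 c, 0 < c & off_characters c (functional b0 b1 b2 b3 b4 b5 b6).
Proof.
move=> b456; rewrite /off_characters /=.
have [b6_0 | b6_neq0] := eqVneq b6 0; last by exists 1; rewrite //= fcoef_functional //; left.
have b45_gt0 : 0 < `|b4| + `|b5|.
  rewrite lt_def addr_ge0 // andbT paddr_eq0 // !normr_eq0.
  by apply/negP => /andP[/eqP ? /eqP ?]; apply: b456.
by exists ((`|b4| + `|b5|) / 2); rewrite /= ?fcoef_functional //=; [lra | right; lra].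
Qed.

Section Limits.
Variables f5 f6 : nat -> R.
Hypotheses (f5_cvg0 : f5 @ \oo --> 0) (f6_cvg0 : f6 @ \oo --> 0).

Let Ok k := coadj_orbit (functional 0 0 0 0 (f5 k) (f6 k) 0).

Lemma orbit_limit_character b0 b1 b2 b3 b4 b5 b6 :
  orbit_converges Ok (coadj_orbit (functional b0 b1 b2 b3 b4 b5 b6)) ->
  [/\ b4 = 0, b5 = 0 & b6 = 0].
Proof.
move=> conv; have [//|/(off_characters_noncharacter b0 b1 b2 b3) [c c_gt0 Vf]] :=
  pselect [/\ b4 = 0, b5 = 0 & b6 = 0]; exfalso.
have [N OkV] := orbit_converges_invariant conv (@open_off_characters c)
  (@coad_invariant_off_characters c) Vf.
have c2_gt0 : 0 < c / 2 by lra.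
have [N5 _ f5_small] := cvgr0_norm_lt _ f5_cvg0 _ c2_gt0.
have [N6 _ f6_small] := cvgr0_norm_lt _ f6_cvg0 _ c2_gt0.
pose k := maxn N (maxn N5 N6).
have := OkV k (leq_maxl _ _) _ (coadj_orbit_refl _).
rewrite /off_characters /= !fcoef_functional //= eqxx => -[//|].
have : `|f5 k| < c / 2 by apply: f5_small; rewrite /= /k; lia.
have : `|f6 k| < c / 2 by apply: f6_small; rewrite /= /k; lia.
lra.
Qed.

Lemma functional_cvg a0 a1 a2 a3 :
  functional a0 a1 a2 a3 (f5 k) (f6 k) 0 @[k --> \oo] --> functional a0 a1 a2 a3 0 0 0.
Proof.
pose e4 : 'rV[R]_7 := functional 0 0 0 0 1 0 0.
pose e5 : 'rV[R]_7 := functional 0 0 0 0 0 1 0.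
have decomp k : functional a0 a1 a2 a3 (f5 k) (f6 k) 0 =
    functional a0 a1 a2 a3 0 0 0 + f5 k *: e4 + f6 k *: e5.
  apply/matrixP => i j; rewrite !mxE.
  by case: j => [[|[|[|[|[|[|[|j]]]]]]] ?] /=; rewrite ?mulr0 ?mulr1 ?addr0 ?add0r.
rewrite (funext decomp).
have := cvgD (cvgD (cvg_cst (functional a0 a1 a2 a3 0 0 0))
  (cvgZ f5_cvg0 (cvg_cst e4))) (cvgZ f6_cvg0 (cvg_cst e5)).
by rewrite !scale0r !addr0; apply.
Qed.

Lemma orbit_converges_character a0 a1 a2 a3 :
  (forall k, (f5 k, f6 k) != (0, 0)) ->
  orbit_converges Ok (coadj_orbit (functional a0 a1 a2 a3 0 0 0)).
Proof.
move=> f56_neq0 U [Uorb Uopen] U_a.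
have W_a : (\bigcup_(O in U) O) (functional a0 a1 a2 a3 0 0 0).
  by exists (coadj_orbit (functional a0 a1 a2 a3 0 0 0)) => //; exact: coadj_orbit_refl.
have [N _ W_pk] := functional_cvg (open_nbhs_nbhs (conj Uopen W_a)).
exists N; move=> k /W_pk [Q UQ Q_pk].
have [g Q_eq] := Uorb Q UQ; rewrite Q_eq in UQ Q_pk.
by rewrite /Ok -(coadj_orbit_generic_of_mem (f56_neq0 k) Q_pk).
Qed.

End Limits.

End CoadjointOrbitsN7.

Theorem mainTheorem3 (R : realType) (f5 f6 : nat -> R) :
  (forall k, f5 k != 0) -> (forall k, f6 k != 0) ->
  f5 @ \oo --> (0 : R) -> f6 @ \oo --> (0 : R) ->
  forall O : set 'rV[R]_7, is_orbit O ->
    (orbit_converges (fun k => coadj_orbit (functional 0 0 0 0 (f5 k) (f6 k) 0)) O <->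
     exists a1 a2 a3 a4 : R, O = coadj_orbit (functional a1 a2 a3 a4 0 0 0)).
Proof.
(* [f5 k != 0] alone makes every O_k a plane. *)
move=> f5_neq0 _ f5_cvg0 f6_cvg0 _ [f ->].
have [b0 [b1 [b2 [b3 [b4 [b5 [b6 ->]]]]]]] := exists_functional f.
split=> [/(orbit_limit_character f5_cvg0 f6_cvg0) [-> -> ->] | [a0 [a1 [a2 [a3 ->]]]]].
  by exists b0, b1, b2, b3.
by apply: orbit_converges_character => // k; rewrite xpair_eqE negb_and f5_neq0.
Qed.
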